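(* For every $d\ge0$, $\mathbf S_d\,\mathbf F_d\,\mathbf S_d^{-1}=\mathbf H_d$.
   Context: All matrices here have rows and columns indexed by $-1,0,\dots,d$. For integers $i,d\ge -1$ define $f_{-1,-1}=1$, $f_{-1,d}=0$ for $d\ge0$, $f_{i,-1}=0$ for $i\ge0$, and $f_{i,d}=(i+1)!\,S(d+1,i+1)$ for $i,d\ge0$, where $S(\cdot,\cdot)$ is the Stirling number of the second kind; $\mathbf F_d=(f_{i,j})_{-1\le i,j\le d}$. The shift matrix is $\mathbf S_d=\left((-1)^{d+1+i+j}\binom{d-j}{i+1}\right)_{-1\le i,j\le d}$. For $m\ge1$ and a permutation $\sigma$ of $[m]=\{1,\dots,m\}$, $\mathrm{des}(\sigma)$ is the number of $1\le t\le m-1$ with $\sigma(t)>\sigma(t+1)$; $A(m,i,j)$ is the number of permutations $\sigma$ of $[m]$ with $\mathrm{des}(\sigma)=i$ and $\sigma(1)=j$ (and $A(m,i,j)=0$ if $i<0$). Define $h^{(d)}_{i,j}=A(d+2,i+1,j+2)$ and $\mathbf H_d=(h^{(d)}_{i,j})_{-1\le i,j\le d}$. *)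

(* Matrices indexed by -1..d are represented as
   'M[rat]_(d.+2); the ordinal k : 'I_(d.+2) stands for the index k-1. *)
From HB Require Import structures.
From mathcomp Require Import all_boot all_order all_algebra all_fingroup.
Set Implicit Arguments. Unset Strict Implicit. Unset Printing Implicit Defensive.
Import Order.TTheory GRing.Theory Num.Theory.

Fixpoint stirling2 (n k : nat) : nat :=
  match n, k with
  | 0, 0 => 1
  | 0, _.+1 => 0
  | _.+1, 0 => 0
  | n'.+1, k'.+1 => k'.+1 * stirling2 n' k'.+1 + stirling2 n' k'
  end.

(* f_{i,d} for i,d >= -1, with arguments shifted by one: fnum (i+1) (d+1). *)
Definition fnum (a b : nat) : nat :=
  match a, b with
  | 0, 0 => 1
  | 0, _.+1 => 0
  | _.+1, 0 => 0
  | _, _ => a`! * stirling2 b a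
  end.

(* des(sigma) for sigma a permutation of [m] (encoded on 'I_m, value v <-> v+1) *)
Definition des (m : nat) (s : {perm 'I_m}) : nat :=
  #|[set t : 'I_m | [exists u : 'I_m, (val u == (val t).+1) && (val (s u) < val (s t))]]|.

Definition Aeul (m i j : nat) : nat :=
  #|[set s : {perm 'I_m} | (des s == i) &&
       [exists t : 'I_m, (val t == 0) && ((val (s t)).+1 == j)]]|.

Local Open Scope ring_scope.

Definition Fmx (d : nat) : 'M[rat]_(d.+2) :=
  \matrix_(k, l) (fnum k l)%:R.

(* S_d = ((-1)^{d+1+i+j} binom(d-j, i+1)), with i = k-1, j = l-1 *)
Definition Smx (d : nat) : 'M[rat]_(d.+2) :=
  \matrix_(k, l) ((-1) ^+ (d.+1 + k + l) * ('C(d.+1 - l, k))%:R).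

(* H_d = (A(d+2, i+1, j+2)), with i = k-1, j = l-1 *)
Definition Hmx (d : nat) : 'M[rat]_(d.+2) :=
  \matrix_(k, l) (Aeul d.+2 k l.+1)%:R.

From HB Require Import structures.
From mathcomp Require Import all_boot all_order all_algebra all_fingroup.
From mathcomp Require Import zify.
Set Implicit Arguments. Unset Strict Implicit. Unset Printing Implicit Defensive.
Import Order.TTheory GRing.Theory Num.Theory.

(** The shift matrix factors as S = B J, where J is the reversal permutation
   matrix and B = ((-1)^(i+j) C(j,i)) is the inverse of the Pascal matrix
   P = (C(j,i)).  So it suffices to show (J F J) P = P H.  Entry (k, l) of P H
   is the k-th binomial moment sum_s C(des s, k) over the permutations s of
   [d+2] with s(1) = l+1.  Deleting the first letter of s keeps its descents,
   except for one lost descent exactly when the new first letter is smaller;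
   this gives a recursion in d whose solution is
   (d+1-k)! sum_m C(l,m) S(d+1-m, d+1-k), i.e. entry (k, l) of (J F J) P. *)

Arguments stirling2 : simpl never.

Lemma stirling2SS n k :
  stirling2 n.+1 k.+1 = k.+1 * stirling2 n k.+1 + stirling2 n k.
Proof. by []. Qed.

Lemma stirling2S0 n : stirling2 n.+1 0 = 0. Proof. by []. Qed.

Lemma stirling2_small n k : n < k -> stirling2 n k = 0.
Proof.
elim: n k => [|n IHn] [|k] // lt_nk.
by rewrite stirling2SS !IHn ?muln0 // ltnW.
Qed.

Lemma stirling2nn n : stirling2 n n = 1.
Proof.
by elim: n => // n IHn; rewrite stirling2SS IHn stirling2_small ?muln0.
Qed.

Lemma fnumE a b : fnum a b = a`! * stirling2 b a.
Proof.
by case: a => [|a]; case: b => [|b] //; rewrite stirling2_small ?muln0.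
Qed.

Lemma sum_binS n (F : nat -> nat) :
  \sum_(m < n.+2) 'C(n.+1, m) * F m
    = \sum_(m < n.+1) 'C(n, m) * F m + \sum_(m < n.+1) 'C(n, m) * F m.+1.
Proof.
rewrite big_ord_recl [in RHS]big_ord_recl !bin0 -addnA; congr (_ + _).
rewrite (eq_bigr (fun i : 'I_n.+1 => 'C(n, i.+1) * F i.+1 + 'C(n, i) * F i.+1)).
  by rewrite big_split big_ord_recr /= bin_small // mul0n addn0.
by move=> i _; rewrite binS mulnDl.
Qed.

Lemma stirling2S_binomial_sum n k :
  \sum_(m < n.+1) 'C(n, m) * stirling2 (n - m) k = stirling2 n.+1 k.+1.
Proof.
elim: n k => [|n IHn] k.
  by rewrite big_ord1 stirling2SS (@stirling2_small 0 k.+1) // muln0 mul1n.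
rewrite (sum_binS n (fun m => stirling2 (n.+1 - m) k)) /= IHn.
case: k => [|k].
  rewrite big1 ?add0n => [|m _]; last first.
    by rewrite subSn ?leq_ord // stirling2S0 muln0.
  by rewrite [RHS]stirling2SS stirling2S0 mul1n addn0.
have sum_stirling2S : \sum_(m < n.+1) 'C(n, m) * stirling2 (n.+1 - m) k.+1
    = k.+1 * stirling2 n.+1 k.+2 + stirling2 n.+1 k.+1.
  rewrite -!IHn big_distrr -big_split; apply: eq_bigr => m _.
  by rewrite subSn ?leq_ord // stirling2SS mulnDr mulnCA.
by rewrite sum_stirling2S [RHS]stirling2SS; lia.
Qed.

Lemma sum_bin_ltn j m : \sum_(i < j) 'C(i, m) = 'C(j, m.+1).
Proof.
by elim: j => [|j IHj]; rewrite ?big_ord0 // big_ord_recr /= IHj binS addnC.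
Qed.

Definition descent m (s : 'S_m) (t : 'I_m) : bool :=
  [exists u : 'I_m, (val u == t.+1) && (s u < s t)].

Lemma desE m (s : 'S_m) : des s = \sum_(t < m) descent s t.
Proof.
rewrite /des cardsE -sum1_card big_mkcond.
by apply: eq_bigr => t _; rewrite unfold_in.
Qed.

Lemma des_leq m (s : 'S_m.+1) : des s <= m.
Proof.
rewrite desE big_ord_recr /=.
have -> : descent s ord_max = false.
  apply/existsP => -[u /andP[/eqP u_max _]].
  by have := ltn_ord u; rewrite u_max ltnn.
rewrite addn0 -[leqRHS]card_ord -sum1_card.
by apply: leq_sum => t _; case: descent.
Qed.

Lemma bump_ltn h a b : (bump h a < bump h b) = (a < b).
Proof. by rewrite /bump; case: leqP; case: leqP; lia. Qed.

Section LiftPerm0.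
Variables (n : nat) (j : 'I_n.+2) (s : 'S_n.+1).
Local Notation s' := (lift_perm ord0 j s).

Lemma descent_lift_perm0 : descent s' ord0 = (s ord0 < j).
Proof.
have s'1 : s' (lift ord0 ord0) = lift j (s ord0) by rewrite lift_perm_lift.
apply/existsP/idP => [[u /andP[/eqP u1]]|lt_s0j].
  have -> : u = lift ord0 ord0 by apply: val_inj.
  by rewrite s'1 lift_perm_id /= /bump; case: leqP; lia.
exists (lift ord0 ord0); rewrite eqxx s'1 lift_perm_id /= /bump.
by move: lt_s0j; case: leqP; lia.
Qed.

Lemma descent_lift_perm_lift t : descent s' (lift ord0 t) = descent s t.
Proof.
apply/existsP/existsP => -[u /andP[/eqP u_next lt_u]].
  case: (unliftP ord0 u) u_next lt_u => [v ->|->] //.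
  rewrite !lift_perm_lift bump_ltn => v_next lt_v.
  exists v; rewrite lt_v andbT; apply/eqP.
  by move: v_next; rewrite /= /bump; lia.
exists (lift ord0 u); rewrite !lift_perm_lift bump_ltn lt_u andbT.
by rewrite /= /bump !leq0n !add1n u_next.
Qed.

Lemma des_lift_perm0 : des s' = des s + (s ord0 < j).
Proof.
rewrite !desE big_ord_recl descent_lift_perm0 addnC; congr (_ + _).
by apply: eq_bigr => t _; rewrite descent_lift_perm_lift.
Qed.

End LiftPerm0.

Section UnliftPerm.
Variables (n : nat) (i : 'I_n.+1) (s : 'S_n.+1).

Definition unlift_perm_fun (k : 'I_n) : 'I_n :=
  odflt k (unlift (s i) (s (lift i k))).

Lemma lift_unlift_perm_fun k : lift (s i) (unlift_perm_fun k) = s (lift i k).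
Proof.
have : s i != s (lift i k) by rewrite (inj_eq perm_inj) neq_lift.
by rewrite /unlift_perm_fun => /unlift_some[k' -> ->].
Qed.

Lemma unlift_perm_fun_inj : injective unlift_perm_fun.
Proof.
move=> k1 k2 /(congr1 (lift (s i))); rewrite !lift_unlift_perm_fun.
by move/perm_inj/lift_inj.
Qed.

Definition unlift_perm : 'S_n := perm unlift_perm_fun_inj.

Lemma lift_perm_unlift : lift_perm i (s i) unlift_perm = s.
Proof.
apply/permP => k; case: (unliftP i k) => [k'|] ->; last by rewrite lift_perm_id.
by rewrite lift_perm_lift permE lift_unlift_perm_fun.
Qed.

End UnliftPerm.

Lemma unlift_lift_perm n (i j : 'I_n.+1) (s : 'S_n) :
  unlift_perm i (lift_perm i j s) = s.
Proof.
apply/permP => k; apply: (@lift_inj _ j).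
by rewrite permE -{1}(lift_perm_id i j s) lift_unlift_perm_fun lift_perm_lift.
Qed.

Lemma big_lift_perm (R : Type) (idx : R) (op : Monoid.com_law idx)
    n (i j : 'I_n.+1) (F : 'S_n.+1 -> R) :
  \big[op/idx]_(s : 'S_n.+1 | s i == j) F s
    = \big[op/idx]_(s : 'S_n) F (lift_perm i j s).
Proof.
rewrite (reindex (lift_perm i j)).
  by apply: eq_bigl => s; rewrite lift_perm_id eqxx.
exists (unlift_perm i) => [s _ | s /eqP <-]; first exact: unlift_lift_perm.
exact: lift_perm_unlift.
Qed.

Lemma Aeul_sum m i j :
  Aeul m.+1 i j.+1 = \sum_(s : 'S_m.+1 | s ord0 == j :> nat) (des s == i).
Proof.
rewrite /Aeul cardsE -sum1_card big_mkcond [RHS]big_mkcond.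
apply: eq_bigr => s _; rewrite unfold_in.
have -> : [exists t : 'I_m.+1, (val t == 0) && ((val (s t)).+1 == j.+1)]
    = (s ord0 == j :> nat).
  apply/existsP/idP => [[t /andP[/eqP t0]]|s0j]; last first.
    by exists ord0; rewrite eqSS.
  by rewrite (_ : t = ord0) //; apply: val_inj.
by case: (des s == i); case: (_ == _).
Qed.

Definition des_moment n k j :=
  \sum_(s : 'S_n.+1 | s ord0 == j :> nat) 'C(des s, k).

Lemma des_momentE n k j :
  des_moment n k j = \sum_(i < n.+1) 'C(i, k) * Aeul n.+1 i j.+1.
Proof.
under eq_bigr do rewrite Aeul_sum big_distrr /=.
rewrite exchange_big; apply: eq_bigr => s _.
transitivity (\sum_(i < n.+1 | i == des s :> nat) 'C(i, k)).
  by rewrite (big_ord1_eq _ (fun i => 'C(i, k))) ltnS des_leq.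
rewrite big_mkcond; apply: eq_bigr => i _.
by rewrite eq_sym; case: eqP; rewrite ?muln1 ?muln0.
Qed.

Lemma sum_des_moment n k (P : pred nat) :
  \sum_(j < n.+1 | P j) des_moment n k j
    = \sum_(s : 'S_n.+1 | P (s ord0)) 'C(des s, k).
Proof.
rewrite (partition_big (fun s : 'S_n.+1 => s ord0)
  [pred j : 'I_n.+1 | P j]) //=.
apply: eq_bigr => j Pj; apply: eq_bigl => s.
by rewrite val_eqE; case: eqP => [->|]; rewrite ?Pj ?andbF.
Qed.

Lemma des_moment_rec n k j : j <= n.+1 ->
  des_moment n.+1 k j = \sum_(i < n.+1) des_moment n k i
    + (if k is k'.+1 then \sum_(i < j) des_moment n k' i else 0).
Proof.
move=> le_jn; have j_inord : j = (inord j : 'I_n.+2) :> nat by rewrite inordK.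
have -> : des_moment n.+1 k j
    = \sum_(s : 'S_n.+2 | s ord0 == inord j) 'C(des s, k).
  by apply: eq_bigl => s; rewrite {1}j_inord val_eqE.
rewrite big_lift_perm.
under eq_bigr do rewrite des_lift_perm0 -j_inord.
rewrite (sum_des_moment n k predT).
case: k => [|k]; first by rewrite addn0; apply: eq_bigr => s _; rewrite !bin0.
rewrite -(big_ord_narrow (F := des_moment n k) le_jn).
rewrite (sum_des_moment n k (fun i => i < j)) [X in _ + X]big_mkcond.
rewrite -big_split; apply: eq_bigr => s _.
by case: (s ord0 < j); rewrite /= ?addn0 ?addn1 ?binS.
Qed.

Lemma des_moment_large n k j : n < k -> des_moment n k j = 0.
Proof.
move=> lt_nk; rewrite /des_moment big1 // => s _.
by rewrite bin_small // (leq_ltn_trans (des_leq s)).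
Qed.

Lemma des_moment0 : des_moment 0 0 0 = 1.
Proof.
rewrite /des_moment (eq_bigl xpredT) => [|s]; last by rewrite (ord1 (s ord0)).
by under eq_bigr do rewrite bin0; rewrite sum1_card card_Sn.
Qed.

Definition stirling_conv n r j :=
  \sum_(m < n.+1) 'C(j, m) * stirling2 (n - m) r.

Lemma stirling_conv_nn n j : stirling_conv n n j = 1.
Proof.
rewrite /stirling_conv big_ord_recl subn0 bin0 mul1n stirling2nn big1 // => m _.
by rewrite stirling2_small ?muln0 //= /bump /=; have := ltn_ord m; lia.
Qed.

Lemma sum_stirling_conv_ltn n r j :
  \sum_(i < j) stirling_conv n r i + stirling2 n.+1 r = stirling_conv n.+1 r j.
Proof.
rewrite /stirling_conv exchange_big [RHS]big_ord_recl subn0 bin0 mul1n addnC.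
congr (_ + _); apply: eq_bigr => m _.
by rewrite -big_distrl /= sum_bin_ltn /bump /= add1n subSS.
Qed.

Lemma sum_stirling_conv n r :
  \sum_(i < n.+1) stirling_conv n r i = r.+1 * stirling2 n.+1 r.+1.
Proof.
apply/eqP; rewrite -(eqn_add2r (stirling2 n.+1 r)) sum_stirling_conv_ltn.
by rewrite /stirling_conv stirling2S_binomial_sum stirling2SS.
Qed.

Lemma des_moment_closed n k j : k <= n -> j <= n ->
  des_moment n k j = (n - k)`! * stirling_conv n (n - k) j.
Proof.
elim: n k j => [|n IHn] k j.
  rewrite !leqn0 => /eqP -> /eqP ->.
  by rewrite des_moment0 stirling_conv_nn.
move=> le_kn le_jn; rewrite des_moment_rec //.
case: k le_kn => [_ | k le_kn].
  rewrite addn0 subn0 stirling_conv_nn muln1 factS.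
  rewrite (eq_bigr (fun _ => n`!)) ?sum_nat_const ?card_ord //.
  by move=> i _; rewrite IHn ?leq_ord // subn0 stirling_conv_nn muln1.
rewrite subSS -sum_stirling_conv_ltn mulnDr addnC; congr (_ + _).
  rewrite big_distrr; apply: eq_bigr => i _; rewrite IHn //.
  by rewrite -ltnS (leq_trans (ltn_ord i)).
have [lt_kn | ge_kn] := ltnP k n; last first.
  have -> : k = n by lia.
  by rewrite subnn stirling2S0 muln0 big1 // => i _; rewrite des_moment_large.
rewrite (eq_bigr (fun i : 'I_n.+1 =>
  (n - k.+1)`! * stirling_conv n (n - k.+1) i)).
  rewrite -big_distrr sum_stirling_conv /= mulnA (mulnC _`!) -factS.
  by rewrite -subSn.
by move=> i _; rewrite IHn ?leq_ord.
Qed.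

Lemma sum_fnum_bin d k l : k <= d.+1 -> l <= d.+1 ->
  \sum_(m < d.+2) fnum (d.+1 - k) (d.+1 - m) * 'C(l, m) = des_moment d.+1 k l.
Proof.
move=> le_kd le_ld; rewrite des_moment_closed // big_distrr.
by apply: eq_bigr => m _; rewrite fnumE /= ['C(l, m) * _]mulnC mulnA.
Qed.

Local Open Scope ring_scope.

Lemma sum_alternating_bin (R : pzRingType) l k :
  \sum_(m < l.+1) (-1) ^+ (k + m) * 'C(m, k)%:R * 'C(l, m)%:R
    = (l == k)%:R :> R.
Proof.
elim: l k => [|l IHl] k.
  by rewrite big_ord1 addn0 mulr1; case: k => [|k]; rewrite ?mul1r ?mulr0.
have pascal (G : nat -> R) : \sum_(m < l.+2) G m * 'C(l.+1, m)%:R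
    = \sum_(m < l.+1) G m * 'C(l, m)%:R + \sum_(m < l.+1) G m.+1 * 'C(l, m)%:R.
  rewrite big_ord_recl [in RHS]big_ord_recl !bin0 -addrA; congr (_ + _).
  under eq_bigr do rewrite lift0 binS natrD mulrDr.
  by rewrite big_split /= big_ord_recr /= bin_small // mulr0 addr0.
rewrite (pascal (fun m => (-1) ^+ (k + m) * 'C(m, k)%:R)) IHl.
case: k => [|k].
  rewrite (eq_bigr (fun m : 'I_l.+1 =>
    - ((-1) ^+ (0 + m) * 'C(m, 0)%:R * 'C(l, m)%:R))).
    by rewrite sumrN IHl subrr.
  by move=> m _; rewrite !bin0 addnS exprS mulN1r !mulNr.
rewrite (eq_bigr (fun m : 'I_l.+1 => (-1) ^+ (k + m) * 'C(m, k)%:R * 'C(l, m)%:R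
    - (-1) ^+ (k.+1 + m) * 'C(m, k.+1)%:R * 'C(l, m)%:R)).
  by rewrite sumrB !IHl addrC subrK.
move=> m _; rewrite addnS exprS mulN1r binS natrD mulrDr !mulrDl addrC.
by rewrite addSn exprS mulN1r !mulNr !opprK.
Qed.

Section PascalMatrices.
Variables (R : pzRingType) (n : nat).

Definition pascal_mx : 'M[R]_n := \matrix_(i, j) 'C(j, i)%:R.

Definition signed_pascal_mx : 'M[R]_n :=
  \matrix_(i, j) ((-1) ^+ (i + j) * 'C(j, i)%:R).

Lemma mul_signed_pascal_mx : signed_pascal_mx *m pascal_mx = 1%:M.
Proof.
apply/matrixP => i j; rewrite !mxE eq_sym -val_eqE /= -sum_alternating_bin.
rewrite (big_ord_widen n
  (fun m => (-1) ^+ (i + m) * 'C(m, i)%:R * 'C(j, m)%:R)) //.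
rewrite [RHS]big_mkcond; apply: eq_bigr => m _; rewrite !mxE -mulrA.
by case: ltnP => // lt_jm; rewrite (bin_small lt_jm) !mulr0.
Qed.

End PascalMatrices.

Definition rev_perm n : 'S_n := perm (@rev_ord_inj n).

Lemma rev_permE n (i : 'I_n) : rev_perm n i = rev_ord i.
Proof. exact: permE. Qed.

Lemma rev_permV n : (rev_perm n)^-1%g = rev_perm n.
Proof.
apply/permP => i; apply: (@perm_inj _ (rev_perm n)).
by rewrite permKV !rev_permE rev_ordK.
Qed.

Lemma rev_perm_mxK (R : pzRingType) n :
  perm_mx (rev_perm n) *m perm_mx (rev_perm n) = 1%:M :> 'M[R]_n.
Proof. by rewrite -perm_mxM -{1}rev_permV mulVg perm_mx1. Qed.

Lemma Smx_col_perm d :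
  Smx d = col_perm (rev_perm d.+2) (signed_pascal_mx rat d.+2).
Proof.
apply/matrixP => k l; rewrite !mxE rev_permE /= subSS.
have -> : (d.+1 + k + l = k + (d.+1 - l) + l.*2)%N by have := ltn_ord l; lia.
by rewrite exprD -mul2n exprM sqrrN !expr1n mulr1.
Qed.

Lemma rev_conj_Fmx_pascal d :
  row_perm (rev_perm d.+2) (col_perm (rev_perm d.+2) (Fmx d))
    *m pascal_mx rat d.+2 = pascal_mx rat d.+2 *m Hmx d.
Proof.
apply/matrixP => k l; rewrite !mxE.
transitivity
  ((\sum_(m < d.+2) fnum (d.+1 - k) (d.+1 - m) * 'C(l, m))%:R : rat).
  rewrite natr_sum; apply: eq_bigr => m _.
  by rewrite !mxE !rev_permE natrM /= !subSS.
rewrite sum_fnum_bin ?leq_ord // des_momentE natr_sum.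
by apply: eq_bigr => m _; rewrite !mxE natrM.
Qed.

Theorem lemma2p5 (d : nat) :
  Smx d \in unitmx /\ Smx d *m Fmx d *m invmx (Smx d) = Hmx d.
Proof.
pose X := perm_mx (rev_perm d.+2) *m pascal_mx rat d.+2.
have S_def : Smx d = signed_pascal_mx rat d.+2 *m perm_mx (rev_perm d.+2).
  by rewrite Smx_col_perm col_permE rev_permV.
have S_X : Smx d *m X = 1%:M.
  rewrite S_def -mulmxA (mulmxA (perm_mx _)) rev_perm_mxK mul1mx.
  exact: mul_signed_pascal_mx.
have [S_unit _] := mulmx1_unit S_X.
split=> //.
have -> : invmx (Smx d) = X by rewrite -[LHS]mulmx1 -S_X mulKmx.
have := rev_conj_Fmx_pascal d; rewrite row_permE col_permE rev_permV => FP.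
rewrite S_def /X -!mulmxA (mulmxA (Fmx d)) (mulmxA (perm_mx _)) FP.
by rewrite mulmxA mul_signed_pascal_mx mul1mx.
Qed.
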